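(* Let $q\ge3$ be a prime power and let $\ell_0,\ell_1,\dots$ be integers with $0\le\ell_i\le q-2$. Let $P_0=[0,\ell_0]\subseteq\mathbb{R}$ and $P_i=P_{i-1}\oplus[0,\ell_i]\subseteq\mathbb{R}^{i+1}$ for $i\ge1$. Then $R(P_i)\to0$ as $i\to\infty$.
   Context: The direct sum of integral convex polytopes $P\subseteq\mathbb{R}^n$ and $Q\subseteq\mathbb{R}^m$ both containing the origin is $P\oplus Q=\mathrm{conv}\big(\{(p,\mathbf{0}):p\in P\}\cup\{(\mathbf{0},y):y\in Q\}\big)\subseteq\mathbb{R}^{n+m}$. For an integral convex polytope $P\subseteq[0,q-2]^n$, $R(P)=|P\cap\mathbb{Z}^n|/(q-1)^n$. *)

From HB Require Import structures.
From mathcomp Require Import all_boot all_order all_algebra.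
From mathcomp Require Import all_classical all_reals all_analysis.
Set Implicit Arguments. Unset Strict Implicit. Unset Printing Implicit Defensive.
Import Order.TTheory GRing.Theory Num.Theory.
Local Open Scope classical_set_scope.
Local Open Scope ring_scope.

Section Defs.
Variable R : realType.

Definition point (n : nat) := 'I_n -> R.

Definition conv (n : nat) (S : set (point n)) : set (point n) :=
  [set x | exists (m : nat) (w : 'I_m -> R) (p : 'I_m -> point n),
      (forall k, 0 <= w k) /\ \sum_(k < m) w k = 1 /\
      (forall k, S (p k)) /\ (forall j, x j = \sum_(k < m) w k * p k j)].

Definition embl (n m : nat) (p : point n) : point (n + m) :=
  fun j => match fintype.split j with inl a => p a | inr _ => 0 end.
Definition embr (n m : nat) (y : point m) : point (n + m) :=
  fun j => match fintype.split j with inl _ => 0 | inr b => y b end.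

Definition dsum (n m : nat) (P : set (point n)) (Q : set (point m))
  : set (point (n + m)) :=
  conv ([set x | exists p, P p /\ x = @embl n m p] `|`
        [set x | exists y, Q y /\ x = @embr n m y]).

Definition seg (l : nat) : set (point 1) :=
  [set x | 0 <= x ord0 <= l%:R].

(* Relabel a set in R^(n+1) as a set in R^(n.+1) (identical coordinates). *)
Definition castS (n : nat) (S : set (point (n + 1))) : set (point n.+1) :=
  [set x | S (fun j => x (cast_ord (addn1 n) j))].

Fixpoint Pfam (l : nat -> nat) (i : nat) : set (point i.+1) :=
  match i with
  | 0 => seg (l 0)
  | i'.+1 => @castS i'.+1 (@dsum i'.+1 1 (@Pfam l i') (seg (l i'.+1)))
  end.

(* R(P) = |P cap Z^n| / (q-1)^n for P contained in [0,q-2]^n: the integer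
   points of P are counted among the integer points of the box [0,q-2]^n. *)
Definition Rdens (q n : nat) (P : set (point n)) : R :=
  (#|[set x : {ffun 'I_n -> 'I_(q - 1)} |
        `[< P (fun j => ((x j : nat)%:R : R)) >] ]|)%:R
  / ((q - 1)%:R ^+ n).

End Defs.

Definition prime_power (q : nat) : Prop :=
  exists p k : nat, prime p /\ (0 < k)%N /\ q = (p ^ k)%N.

(* Every P_i lies in the simplex {x >= 0, sum x <= q-2}, because the simplex
   contains each segment [0, l_i] and is stable under direct sums.  The integer
   points of [0,q-2]^n with coordinate sum at most s are counted by Rankin's
   trick: weighting a point x by q^(s - sum x) >= 1 bounds their number by
   q^s (sum_(a < q-1) q^-a)^n.  Dividing by (q-1)^n leaves q^s rho^n with
   rho = (sum_(a < q-1) q^-a)/(q-1) < 2/(q-1) <= 1, so R(P_i) decays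
   geometrically. *)
From Pilot Require Import Defs.
From mathcomp Require Import all_boot all_order all_algebra.
From mathcomp Require Import all_classical all_reals all_analysis.
From Stdlib Require Import Lia.
From mathcomp Require Import zify.
Set Implicit Arguments. Unset Strict Implicit. Unset Printing Implicit Defensive.
Import Order.TTheory GRing.Theory Num.Theory.
Import numFieldNormedType.Exports.
Local Open Scope classical_set_scope.
Local Open Scope ring_scope.

Section Simplex.
Variables (R : realType) (s : R).

Definition simplex (n : nat) : set ('I_n -> R) :=
  [set x | (forall j, 0 <= x j) /\ \sum_j x j <= s].
Arguments simplex n : clear implicits.

Lemma conv_sub_simplex n (S : set ('I_n -> R)) :
  S `<=` simplex n -> Defs.conv S `<=` simplex n.
Proof.
move=> HS x [m [w [p [w0 [w1 [Sp xE]]]]]]; split.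
  move=> j; rewrite xE; apply: sumr_ge0 => k _; apply: mulr_ge0 => //.
  by case: (HS _ (Sp k)).
under eq_bigr do rewrite xE.
rewrite exchange_big /=.
under eq_bigr do rewrite -mulr_sumr.
apply: (@le_trans _ _ (\sum_(k < m) w k * s)).
  by apply: ler_sum => k _; apply: ler_wpM2l => //; case: (HS _ (Sp k)).
by rewrite -mulr_suml w1 mul1r.
Qed.

Lemma embl_simplex n m (p : 'I_n -> R) :
  simplex n p -> simplex (n + m) (@embl R n m p).
Proof.
move=> [p0 ps]; split; first by move=> j; rewrite /embl; case: fintype.split.
rewrite big_split_ord /=.
under eq_bigr do rewrite /embl -[lshift _ _]/(unsplit (inl _)) unsplitK.
under [X in _ + X]eq_bigr do rewrite /embl -[rshift _ _]/(unsplit (inr _)) unsplitK.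
by rewrite [X in _ + X]big1 // addr0.
Qed.

Lemma embr_simplex n m (y : 'I_m -> R) :
  simplex m y -> simplex (n + m) (@embr R n m y).
Proof.
move=> [y0 ys]; split; first by move=> j; rewrite /embr; case: fintype.split.
rewrite big_split_ord /=.
under eq_bigr do rewrite /embr -[lshift _ _]/(unsplit (inl _)) unsplitK.
under [X in _ + X]eq_bigr do rewrite /embr -[rshift _ _]/(unsplit (inr _)) unsplitK.
by rewrite big1 // add0r.
Qed.

Lemma dsum_sub_simplex n m (P : set ('I_n -> R)) (Q : set ('I_m -> R)) :
  P `<=` simplex n -> Q `<=` simplex m -> dsum P Q `<=` simplex (n + m).
Proof.
move=> HP HQ; apply: conv_sub_simplex => _ [[p [Pp ->]]|[y [Qy ->]]].
  exact/embl_simplex/HP.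
exact/embr_simplex/HQ.
Qed.

Lemma castS_sub_simplex n (S : set ('I_(n + 1) -> R)) :
  S `<=` simplex (n + 1) -> castS S `<=` simplex n.+1.
Proof.
move=> HS x /HS [x0 xs]; split.
  by move=> j; have := x0 (cast_ord (esym (addn1 n)) j); rewrite cast_ordKV.
rewrite (reindex (cast_ord (addn1 n))) //.
by exists (cast_ord (esym (addn1 n))) => i _; [exact: cast_ordK | exact: cast_ordKV].
Qed.

Lemma seg_sub_simplex (l : nat) : l%:R <= s -> @seg R l `<=` simplex 1.
Proof.
move=> ls x /andP[x0 xl]; split; first by move=> j; rewrite (ord1 j).
by rewrite big_ord1; apply: le_trans ls.
Qed.

Lemma Pfam_sub_simplex (l : nat -> nat) :
  (forall i, (l i)%:R <= s) -> forall i, @Pfam R l i `<=` simplex i.+1.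
Proof.
move=> ls; elim=> [|i IH] /=; first exact: seg_sub_simplex.
by apply/castS_sub_simplex/dsum_sub_simplex => //; exact: seg_sub_simplex.
Qed.

End Simplex.

Lemma geometric_sum_le (R : realType) (t : R) (N : nat) : 0 <= t -> t <= 1 ->
  \sum_(a < N.+1) t ^+ a <= 1 + N%:R * t.
Proof.
move=> t0 t1; elim: N => [|N IH]; first by rewrite big_ord1 expr0 mul0r addr0.
rewrite big_ord_recr /= -natr1 mulrDl mul1r addrA.
by apply: lerD => //; rewrite exprS; apply: ler_piMr => //; exact: exprn_ile1.
Qed.

(* Rankin's trick: each counted [x] satisfies [1 <= t^-s * t^(sum x)], and the
   sum of [t^(sum x)] over all of ['I_N^n] factors as a product. *)
Lemma card_ffun_sum_le (R : realType) (N n s : nat) (t : R)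
    (A : set {ffun 'I_n -> 'I_N}) :
  0 < t -> t <= 1 -> (forall x, x \in A -> (\sum_j (x j : nat) <= s)%N) ->
  (#|A|%:R : R) <= t^-1 ^+ s * (\sum_(a < N) t ^+ a) ^+ n.
Proof.
move=> t0 t1 hA.
have Ks0 : 0 <= t^-1 ^+ s by rewrite exprn_ge0 // invr_ge0 ltW.
rewrite -sumr_const big_mkcond /=.
apply: (@le_trans _ _ (\sum_(x : {ffun 'I_n -> 'I_N}) t^-1 ^+ s * \prod_j t ^+ x j)).
  apply: ler_sum => x _; case: ifP => xA; last first.
    by rewrite mulr_ge0 // prodr_ge0 // => j _; rewrite exprn_ge0 // ltW.
  rewrite -(big_morph (fun k : nat => t ^+ k) (exprD t) (expr0 t)) /=.
  apply: (@le_trans _ _ (t^-1 ^+ s * t ^+ s)).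
    by rewrite -exprMn mulVf ?gt_eqF // expr1n.
  by apply: ler_wpM2l => //; apply: ler_wiXn2l => //; [exact: ltW | exact: hA].
rewrite -mulr_sumr; apply: ler_wpM2l => //.
rewrite -(bigA_distr_bigA (fun (j : 'I_n) (a : 'I_N) => t ^+ a)) /=.
by rewrite prodr_const card_ord.
Qed.

Lemma Rdens_le_of_sub_simplex (R : realType) (q n s : nat) (t : R)
    (P : set ('I_n -> R)) :
  0 < t -> t <= 1 -> P `<=` @simplex R s%:R n ->
  Rdens q P <= t^-1 ^+ s * ((\sum_(a < q - 1) t ^+ a) / (q - 1)%:R) ^+ n.
Proof.
move=> t0 t1 Psimplex; rewrite /Rdens expr_div_n mulrA.
apply: ler_wpM2r; first by rewrite invr_ge0 exprn_ge0.
apply: card_ffun_sum_le => // x; rewrite inE => /asboolP /Psimplex [_].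
by rewrite -natr_sum ler_nat.
Qed.

Lemma sum_inv_powers_lt (R : realType) (q : nat) : (3 <= q)%N ->
  \sum_(a < q - 1) (q%:R : R)^-1 ^+ a < (q - 1)%:R.
Proof.
move=> q3; have q0 : (0 : R) < q%:R by rewrite ltr0n; lia.
have t0 : 0 <= (q%:R : R)^-1 by rewrite invr_ge0 ltW.
have t1 : (q%:R : R)^-1 <= 1 by rewrite invr_le1 ?unitfE ?gt_eqF // ler1n; lia.
have -> : (q - 1 = (q - 2).+1)%N by lia.
apply: le_lt_trans (geometric_sum_le _ t0 t1) _.
apply: (@lt_le_trans _ _ (1 + 1)); last by rewrite -natr1 lerD2r ler1n; lia.
by rewrite ltrD2l ltr_pdivrMr // mul1r ltr_nat; lia.
Qed.

Theorem mainTheorem9 (R : realType) (q : nat) (l : nat -> nat)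
  (hq : (3 <= q)%N) (hpp : prime_power q)
  (hl : forall i, (l i <= q - 2)%N) :
  (fun i : nat => @Rdens R q i.+1 (@Pfam R l i)) @ \oo --> (0 : R).
Proof.
have q0 : (0 : R) < q%:R by rewrite ltr0n; lia.
set t : R := q%:R^-1.
have t0 : 0 < t by rewrite invr_gt0.
have t1 : t <= 1 by rewrite invr_le1 ?unitfE ?gt_eqF // ler1n; lia.
set rho := (\sum_(a < q - 1) t ^+ a) / (q - 1)%:R.
have rho0 : 0 <= rho by rewrite divr_ge0 // sumr_ge0 // => a _; rewrite exprn_ge0 // ltW.
have rho1 : rho < 1 by rewrite ltr_pdivrMr ?mul1r ?sum_inv_powers_lt // ltr0n; lia.
set K : R := t^-1 ^+ (q - 2) * rho.
apply: (@squeeze_cvgr _ _ _ _ (fun=> 0) (fun i => K * rho ^+ i)).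
- apply: nearW => i; rewrite /Rdens divr_ge0 ?exprn_ge0 //=.
  rewrite /K -mulrA -exprS; apply: Rdens_le_of_sub_simplex => //.
  by apply: Pfam_sub_simplex => k; rewrite ler_nat.
- exact: cvg_cst.
- rewrite -[X in _ --> X](mulr0 K); apply: cvgMl_tmp.
  by apply: cvg_expr; rewrite ger0_norm.
Qed.
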